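(* Let $p$ be a prime. Then: (1) every integer of the form $p_1^{2p^2-1}$ with $p_1$ prime is $p^2$-$T_0T^\ast$-perfect; (2) if $p$ is odd, every integer of the form $p_1^{(p-1)/2}\cdot p_2^{(p-1)/2}$ with distinct primes $p_1,p_2$ is $p^2$-$T_0T^\ast$-perfect; (3) every integer $n>1$ that is $p^2$-$T_0T^\ast$-perfect is of the form $p_1^{2p^2-1}$ with $p_1$ prime, or (with $p$ odd) of the form $p_1^{(p-1)/2}\cdot p_2^{(p-1)/2}$ with distinct primes $p_1,p_2$.
   Context: For a positive integer $m$, $T(m)$ denotes the product of all positive divisors of $m$, and $T^\ast(m)$ the product of all unitary divisors of $m$ (divisors $d$ with $\gcd(d,m/d)=1$). For an integer $K\ge 2$, an integer $n>1$ is called $K$-$T_0T^\ast$-perfect if $T(T^\ast(n))=n^K$. *)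

From mathcomp Require Import all_boot.
Set Implicit Arguments. Unset Strict Implicit. Unset Printing Implicit Defensive.

Definition T (m : nat) : nat := \prod_(d <- divisors m) d.

Definition Tstar (m : nat) : nat :=
  \prod_(d <- divisors m | coprime d (m %/ d)) d.

Definition T0Tstar_perfect (K n : nat) : Prop :=
  1 < n /\ T (Tstar n) = n ^ K.

From mathcomp Require Import all_boot zify.
Set Implicit Arguments. Unset Strict Implicit. Unset Printing Implicit Defensive.

(* Pairing each divisor d of m with m %/ d gives T(m)^2 = m^tau(m) and
   T*(m)^2 = m^tau*(m), where tau and tau* count the divisors and the unitary
   divisors of m.  Both counts are multiplicative, with tau(q^k) = k+1 and
   tau*(q^k) = 2.  Hence for n = q^a * m with q prime not dividing m,
   T*(n) = n^u with u = tau*(m), and T(T*(n)) = n^K becomes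
   2K = u (a u + 1) tau(m^u).  If n has one prime factor this reads 2K = a+1;
   with two it reads K = (2a+1)(2b+1); with three or more u > 1 and K is a
   product of three factors > 1.  For K = p^2 the last case is impossible and
   the middle one forces 2a+1 = 2b+1 = p. *)

Definition tau m := size (divisors m).
Definition tau_star m := count (fun d => coprime d (m %/ d)) (divisors m).

Lemma divn_divisor m d : 0 < m -> d %| m -> m %/ (m %/ d) = d.
Proof. by move=> m_gt0 dv_dm; rewrite divnA // mulKn. Qed.

Lemma perm_divisors_compl m : 0 < m ->
  perm_eq (divisors m) [seq m %/ d | d <- divisors m].
Proof.
move=> m_gt0; apply: uniq_perm => [||e]; first exact: divisors_uniq.
  rewrite map_inj_in_uniq ?divisors_uniq // => d e.
  rewrite -!dvdn_divisors // => dv_dm dv_em eq_de.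
  by rewrite -(divn_divisor m_gt0 dv_dm) eq_de divn_divisor.
rewrite -dvdn_divisors //; apply/idP/mapP => [dv_em | [d]].
  by exists (m %/ e); rewrite ?divn_divisor // -dvdn_divisors ?dvdn_div.
by rewrite -dvdn_divisors // => dv_dm ->; apply: dvdn_div.
Qed.

Lemma prod_divisors_sq m (P : pred nat) : 0 < m ->
  {in divisors m, forall d, P (m %/ d) = P d} ->
  (\prod_(d <- divisors m | P d) d) ^ 2 = m ^ count P (divisors m).
Proof.
move=> m_gt0 P_compl.
have prod_compl : \prod_(d <- divisors m | P d) d
                = \prod_(d <- divisors m | P d) (m %/ d).
  rewrite {1}(perm_big _ (perm_divisors_compl m_gt0)) big_map.
  by rewrite -big_filter (eq_in_filter P_compl) big_filter.
rewrite expnS expn1 {2}prod_compl -big_split /= big_seq_cond.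
rewrite (eq_bigr (fun=> m)) => [|d /andP[]]; last first.
  by rewrite -dvdn_divisors // => /divnK; rewrite mulnC.
by rewrite -big_seq_cond big_const_seq iter_muln_1.
Qed.

Lemma T_sq m : 0 < m -> T m ^ 2 = m ^ tau m.
Proof. by move=> m_gt0; rewrite /tau -count_predT; apply: prod_divisors_sq. Qed.

Lemma Tstar_sq m : 0 < m -> Tstar m ^ 2 = m ^ tau_star m.
Proof.
move=> m_gt0; apply: prod_divisors_sq => // d.
by rewrite -dvdn_divisors // => dv_dm; rewrite divn_divisor // coprime_sym.
Qed.

Lemma perm_divisorsM a b : 0 < a -> 0 < b -> coprime a b ->
  perm_eq (divisors (a * b)) [seq d1 * d2 | d1 <- divisors a, d2 <- divisors b].
Proof.
move=> a_gt0 b_gt0 co_ab; have ab_gt0 : 0 < a * b by rewrite muln_gt0 a_gt0.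
have gcd_divisorM d1 d2 : d1 %| a -> d2 %| b -> gcdn (d1 * d2) a = d1.
  move=> dv_d1a dv_d2b; rewrite mulnC gcdnC Gauss_gcdr.
    by rewrite gcdnC; apply/gcdn_idPl.
  exact: coprime_dvdr dv_d2b co_ab.
apply: uniq_perm => [||e]; first exact: divisors_uniq.
  apply: allpairs_uniq => [||[d1 d2] [e1 e2]]; try exact: divisors_uniq.
  move=> /allpairsP[[x1 x2] /= [+ + [-> ->]]] /allpairsP[[y1 y2] /= [+ + [-> ->]]].
  rewrite -!dvdn_divisors // => dv_x1 dv_x2 dv_y1 dv_y2 /= eq_xy.
  have eq_1 : x1 = y1 by rewrite -(gcd_divisorM x1 x2) // eq_xy gcd_divisorM.
  move: eq_xy; rewrite eq_1 => /eqP; rewrite eqn_pmul2l ?(dvdn_gt0 _ dv_y1) //.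
  by move=> /eqP ->.
rewrite -dvdn_divisors //; apply/idP/allpairsP => [dv_e | [[d1 d2] /= []]].
  pose g := gcdn e a; have g_gt0 : 0 < g by rewrite gcdn_gt0 a_gt0 orbT.
  have def_e : e = g * (e %/ g) by rewrite mulnC divnK ?dvdn_gcdl.
  have dv_eb : e %/ g %| b.
    by rewrite -(dvdn_pmul2l g_gt0) -def_e /g muln_gcdl dvdn_gcd dvdn_mulr.
  by exists (g, e %/ g); rewrite -!dvdn_divisors ?dvdn_gcdr.
by rewrite -!dvdn_divisors // => dv_d1 dv_d2 ->; apply: dvdn_mul.
Qed.

Lemma count_divisorsM (P P1 P2 : pred nat) a b :
  0 < a -> 0 < b -> coprime a b ->
  {in divisors a & divisors b, forall d1 d2, P (d1 * d2) = P1 d1 && P2 d2} ->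
  count P (divisors (a * b)) = count P1 (divisors a) * count P2 (divisors b).
Proof.
move=> a_gt0 b_gt0 co_ab P_M.
rewrite (permP (perm_divisorsM a_gt0 b_gt0 co_ab)) -!sum1_count big_mkcond.
rewrite [X in X * _]big_mkcond [X in _ * X]big_mkcond /=.
rewrite big_allpairs_dep big_distrl /= big_seq [RHS]big_seq.
apply: eq_bigr => d1 d1_a; rewrite big_distrr /= big_seq [RHS]big_seq.
by apply: eq_bigr => d2 d2_b; rewrite P_M //; case: (P1 d1); case: (P2 d2).
Qed.

Lemma tauM a b : 0 < a -> 0 < b -> coprime a b -> tau (a * b) = tau a * tau b.
Proof. by move=> *; rewrite /tau -!count_predT; apply: count_divisorsM. Qed.

Lemma coprime_divisor_complM a b d1 d2 : 0 < a -> 0 < b -> coprime a b ->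
    d1 %| a -> d2 %| b ->
  coprime (d1 * d2) (a * b %/ (d1 * d2))
  = coprime d1 (a %/ d1) && coprime d2 (b %/ d2).
Proof.
move=> a_gt0 b_gt0 co_ab dv_d1 dv_d2.
have co_d1_b : coprime d1 (b %/ d2).
  exact: coprime_dvdr (dvdn_div dv_d2) (coprime_dvdl dv_d1 co_ab).
have co_a_d2 : coprime (a %/ d1) d2.
  exact: coprime_dvdl (dvdn_div dv_d1) (coprime_dvdr dv_d2 co_ab).
have d12_gt0 : 0 < d1 * d2 by rewrite muln_gt0 (dvdn_gt0 a_gt0) ?(dvdn_gt0 b_gt0).
rewrite -{1}(divnK dv_d1) -{1}(divnK dv_d2) mulnACA mulnK //.
by rewrite coprimeMl !coprimeMr co_d1_b (coprime_sym d2) co_a_d2 !andbT.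
Qed.

Lemma tau_starM a b : 0 < a -> 0 < b -> coprime a b ->
  tau_star (a * b) = tau_star a * tau_star b.
Proof.
move=> a_gt0 b_gt0 co_ab; apply: count_divisorsM => // d1 d2.
by rewrite -!dvdn_divisors //; apply: coprime_divisor_complM.
Qed.

Lemma perm_divisorsX q k : prime q ->
  perm_eq (divisors (q ^ k)) [seq q ^ i | i <- iota 0 k.+1].
Proof.
move=> q_pr; have q_gt1 := prime_gt1 q_pr.
apply: uniq_perm => [||d]; first exact: divisors_uniq.
  by rewrite map_inj_uniq ?iota_uniq //; apply: expnI.
rewrite -dvdn_divisors ?expn_gt0 ?prime_gt0 //.
apply/(dvdn_pfactor _ _ q_pr)/mapP => -[i]; rewrite ?mem_iota ?add0n ?ltnS => i_le_k ->.
  by exists i; rewrite ?mem_iota ?add0n ?ltnS.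
by exists i.
Qed.

Lemma tauX q k : prime q -> tau (q ^ k) = k.+1.
Proof.
by move=> q_pr; rewrite /tau (perm_size (perm_divisorsX k q_pr)) size_map size_iota.
Qed.

Lemma tau_starX q k : prime q -> 0 < k -> tau_star (q ^ k) = 2.
Proof.
move=> q_pr k_gt0; have q_gt0 := prime_gt0 q_pr.
rewrite /tau_star (permP (perm_divisorsX k q_pr)) count_map.
case: k k_gt0 => // j _; rewrite -[j.+2]addn1 -add1n !iotaD !count_cat /=.
rewrite (@eq_in_count _ _ pred0) ?count_pred0 => [|i]; last first.
  rewrite mem_iota add0n /= => /andP[i_gt0 i_lt].
  rewrite -expnB ?(ltnW i_lt) // coprime_pexpl // coprime_pexpr ?subn_gt0 //.
  by rewrite prime_coprime ?dvdnn.
by rewrite add0n expn0 divn1 coprime1n divnn expn_gt0 q_gt0 coprimen1.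
Qed.

Lemma tau1 : tau 1 = 1. Proof. by []. Qed.

Lemma tau_star1 : tau_star 1 = 1. Proof. by []. Qed.

Lemma tau_gt0 m : 0 < tau m.
Proof. by rewrite /tau -has_predT; apply/hasP; exists 1; rewrite ?divisor1. Qed.

Lemma tau_star_gt0 m : 0 < tau_star m.
Proof.
by rewrite /tau_star -has_count; apply/hasP; exists 1; rewrite ?divisor1 ?coprime1n.
Qed.

Lemma split_pfactor n : 1 < n ->
  exists q a m, [/\ prime q, 0 < a, 0 < m, coprime q m & n = q ^ a * m].
Proof.
move=> n_gt1; have q_pr := pdiv_prime n_gt1; have n_gt0 := ltnW n_gt1.
have [m co_qm def_n] := pfactor_coprime q_pr n_gt0.
exists (pdiv n), (logn (pdiv n) n), m; split=> //; last by rewrite mulnC.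
  by rewrite logn_gt0 mem_primes q_pr n_gt0 pdiv_dvd.
by move: n_gt0; rewrite def_n muln_gt0 => /andP[].
Qed.

Section PrimePowerFactor.

Variable q : nat.
Hypothesis q_pr : prime q.

Lemma tau_pfactorM k m : 0 < m -> coprime q m -> tau (q ^ k * m) = k.+1 * tau m.
Proof. by move=> m_gt0 co_qm; rewrite tauM ?tauX ?coprimeXl // expn_gt0 prime_gt0. Qed.

Lemma tau_star_pfactorM k m : 0 < k -> 0 < m -> coprime q m ->
  tau_star (q ^ k * m) = 2 * tau_star m.
Proof.
by move=> k_gt0 m_gt0 co_qm; rewrite tau_starM ?tau_starX ?coprimeXl // expn_gt0 prime_gt0.
Qed.

Lemma T0Tstar_perfect_pfactorM K a m : 0 < a -> 0 < m -> coprime q m ->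
  T0Tstar_perfect K (q ^ a * m) <->
  K * 2 = tau_star m * ((a * tau_star m).+1 * tau (m ^ tau_star m)).
Proof.
move=> a_gt0 m_gt0 co_qm; set n := q ^ a * m; set u := tau_star m.
have n_gt1 : 1 < n.
  apply: leq_trans (leq_pmulr _ m_gt0).
  by rewrite -[1](exp1n a) ltn_exp2r ?prime_gt1.
have n_gt0 := ltnW n_gt1.
have Tstar_n : Tstar n = n ^ u.
  apply/eqP; rewrite -(eqn_exp2r _ _ (isT : 0 < 2)) Tstar_sq //.
  by rewrite tau_star_pfactorM // -expnM mulnC.
have tau_nu : tau (n ^ u) = (a * u).+1 * tau (m ^ u).
  by rewrite expnMn -expnM tau_pfactorM ?expn_gt0 ?m_gt0 ?coprimeXr.
have perfect_eq : (T (Tstar n) == n ^ K) = (K * 2 == u * tau (n ^ u)).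
  rewrite -(eqn_exp2r _ _ (isT : 0 < 2)) Tstar_n T_sq ?expn_gt0 ?n_gt0 //.
  by rewrite -!expnM eqn_exp2l // eq_sym.
rewrite /T0Tstar_perfect (rwP eqP) perfect_eq -tau_nu.
by split=> [[_ /eqP] | /eqP].
Qed.

End PrimePowerFactor.

Lemma tau_star_gt1 m : 1 < m -> 1 < tau_star m.
Proof.
move=> /split_pfactor[q [a [m' [q_pr a_gt0 m'_gt0 co_qm' ->]]]].
by rewrite tau_star_pfactorM //; have := tau_star_gt0 m'; lia.
Qed.

Lemma prime_sq_eqM p x y : prime p -> p ^ 2 = x * y -> 1 < x -> 1 < y ->
  x = p /\ y = p.
Proof.
move=> p_pr def_p2 x_gt1 y_gt1; have p_gt0 := prime_gt0 p_pr.
have /(dvdn_pfactor _ _ p_pr)[i i_le2 def_x] : x %| p ^ 2 by rewrite def_p2 dvdn_mulr.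
move: def_p2 x_gt1; rewrite {}def_x; case: i i_le2 => [|[|[|]]] // _.
- by rewrite expn1 -mulnn => /eqP; rewrite eqn_pmul2l // => /eqP <-.
- rewrite -{1}[p ^ 2]muln1 => /eqP; rewrite eqn_pmul2l ?expn_gt0 ?p_gt0 //.
  by move=> /eqP y1; rewrite -y1 in y_gt1.
Qed.

Lemma prime_sq_neq_mul3 p x y z : prime p -> 1 < x -> 1 < y -> 1 < z ->
  p ^ 2 != x * (y * z).
Proof.
move=> p_pr x_gt1 y_gt1 z_gt1; apply/eqP => def_p2.
have [_ def_p] := prime_sq_eqM p_pr def_p2 x_gt1 (ltn_mul y_gt1 z_gt1).
have y_ne1 : y != 1 by rewrite neq_ltn y_gt1 orbT.
have /(prime_nt_dvdP p_pr y_ne1) def_y : y %| p by rewrite -def_p dvdn_mulr.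
by move: def_p; rewrite -def_y; nia.
Qed.

Lemma T0Tstar_perfectX K q a : prime q -> 0 < a ->
  T0Tstar_perfect K (q ^ a) <-> K * 2 = a.+1.
Proof.
move=> q_pr a_gt0; rewrite -[q ^ a]muln1 T0Tstar_perfect_pfactorM ?coprimen1 //.
by rewrite tau_star1 exp1n tau1 !muln1 mul1n.
Qed.

Lemma T0Tstar_perfectXM K q r a b : prime q -> prime r -> q != r -> 0 < a -> 0 < b ->
  T0Tstar_perfect K (q ^ a * r ^ b) <-> K = (a * 2).+1 * (b * 2).+1.
Proof.
move=> q_pr r_pr q_neq_r a_gt0 b_gt0.
have co_qr : coprime q r by rewrite prime_coprime // dvdn_prime2.
rewrite T0Tstar_perfect_pfactorM // ?expn_gt0 ?prime_gt0 ?coprimeXr //.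
by rewrite tau_starX // -expnM tauX //; split; lia.
Qed.

Lemma T0Tstar_perfect_shape K n : T0Tstar_perfect K n ->
  [\/ exists q a, [/\ prime q, n = q ^ a & K * 2 = a.+1],
      exists q r a b, [/\ prime q, prime r, q != r & n = q ^ a * r ^ b]
                      /\ [/\ 0 < a, 0 < b & K = (a * 2).+1 * (b * 2).+1]
    | exists x y z, [/\ 1 < x, 1 < y, 1 < z & K = x * (y * z)]].
Proof.
move=> perf_n; have [n_gt1 _] := perf_n.
have [q [a [m [q_pr a_gt0 m_gt0 co_qm def_n]]]] := split_pfactor n_gt1.
rewrite {}def_n in perf_n *.
have [m_le1 | m_gt1] := leqP m 1.
  have m1 : m = 1 by lia.
  rewrite {}m1 muln1 in perf_n *.
  by apply: Or31; exists q, a; split=> //; apply/(T0Tstar_perfectX _ q_pr a_gt0).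
have [r [b [m' [r_pr b_gt0 m'_gt0 co_rm' def_m]]]] := split_pfactor m_gt1.
rewrite {}def_m in perf_n co_qm m_gt0 *.
have [m'_le1 | m'_gt1] := leqP m' 1.
  have m'1 : m' = 1 by lia.
  rewrite {}m'1 muln1 in perf_n co_qm *.
  have q_neq_r : q != r.
    by apply: contraTneq co_qm => ->; rewrite coprime_pexpr // prime_coprime ?dvdnn.
  apply: Or32; exists q, r, a, b; split; split=> //.
  exact/(T0Tstar_perfectXM _ q_pr r_pr q_neq_r a_gt0 b_gt0).
move: perf_n; rewrite T0Tstar_perfect_pfactorM // tau_star_pfactorM // expnMn -expnM.
rewrite tau_pfactorM ?expn_gt0 ?m'_gt0 ?coprimeXr //.
set u := tau_star m' => eq_K; have u_gt1 : 1 < u := tau_star_gt1 m'_gt1.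
apply: Or33; exists u, (a * (2 * u)).+1, ((b * (2 * u)).+1 * tau (m' ^ (2 * u))).
by have := tau_gt0 (m' ^ (2 * u)); split; nia.
Qed.

Theorem mainTheorem9 (p : nat) (pp : prime p) :
  (forall p1 : nat, prime p1 ->
     T0Tstar_perfect (p ^ 2) (p1 ^ (2 * p ^ 2 - 1)))
  /\ (odd p -> forall p1 p2 : nat, prime p1 -> prime p2 -> p1 != p2 ->
        T0Tstar_perfect (p ^ 2) (p1 ^ ((p - 1) %/ 2) * p2 ^ ((p - 1) %/ 2)))
  /\ (forall n : nat, 1 < n -> T0Tstar_perfect (p ^ 2) n ->
        (exists p1 : nat, prime p1 /\ n = p1 ^ (2 * p ^ 2 - 1))
        \/ (odd p /\ exists p1 p2 : nat, [/\ prime p1, prime p2, p1 != p2 &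
              n = p1 ^ ((p - 1) %/ 2) * p2 ^ ((p - 1) %/ 2)])).
Proof.
have p_gt1 := prime_gt1 pp; have p2_gt0 : 0 < p ^ 2 by rewrite expn_gt0 ltnW.
split; [|split].
- by move=> q q_pr; apply/T0Tstar_perfectX => //; lia.
- move=> p_odd q r q_pr r_pr q_neq_r; set k := (p - 1) %/ 2.
  have def_p : (k * 2).+1 = p by move: p_odd; rewrite /k -{1}[p]odd_double_half; lia.
  by apply/T0Tstar_perfectXM; rewrite // ?def_p ?mulnn //; lia.
- move=> n _ /T0Tstar_perfect_shape[[q [a [q_pr -> eq_pa]]] | | [x [y [z []]]]].
  + by left; exists q; split=> //; congr (_ ^ _); lia.
  + move=> [q [r [a [b [[q_pr r_pr q_neq_r ->] [a_gt0 b_gt0 eq_p2]]]]]].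
    have [def_pa def_pb] : (a * 2).+1 = p /\ (b * 2).+1 = p.
      by apply: prime_sq_eqM => //; lia.
    right; split; first by rewrite -def_pa /= oddM andbF.
    by exists q, r; split=> //; congr (_ ^ _ * _ ^ _); lia.
  + move=> x_gt1 y_gt1 z_gt1 /eqP.
    by rewrite (negbTE (prime_sq_neq_mul3 pp x_gt1 y_gt1 z_gt1)).
Qed.
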